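(* Let $\omega>0$, $c\in[0,1]$ and $H(q,p)=\frac12\omega^{-2}p^2+\frac12(\omega^2+1)q^2$. Let $\psi_h=\varphi^{(B)}_{h/2}\circ\varphi^{(A)}_h\circ\varphi^{(B)}_{h/2}$, where $\varphi^{(A)}_t$ is the flow of $\dot q=\omega^{-2}p,\ \dot p=-c^2\omega^2q$ and $\varphi^{(B)}_t$ the flow of $\dot q=0,\ \dot p=-((1-c^2)\omega^2+1)q$. If $h>0$ satisfies $$ch+2\arctan\!\Big(\frac{h(1+(1-c^2)\omega^2)}{2c\omega^2}\Big)<\pi\ \text{ if }c\in(0,1],\qquad h<\frac{2\omega}{\sqrt{1+\omega^2}}\ \text{ if }c=0,$$ then the integrator is stable (the powers of its one-step matrix are bounded). *)

From Stdlib Require Import Reals.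
Open Scope R_scope.

Definition state := (R * R)%type.

Definition is_flow (V : state -> state) (phi : R -> state -> state) : Prop :=
  forall x : state,
    phi 0 x = x /\
    forall t : R,
      derivable_pt_lim (fun s => fst (phi s x)) t (fst (V (phi t x))) /\
      derivable_pt_lim (fun s => snd (phi s x)) t (snd (V (phi t x))).

Definition field_A (w c : R) (x : state) : state :=
  (/ (w ^ 2) * snd x, - (c ^ 2 * w ^ 2) * fst x).

Definition field_B (w c : R) (x : state) : state :=
  (0, - ((1 - c ^ 2) * w ^ 2 + 1) * fst x).

Definition strang (phiA phiB : R -> state -> state) (h : R) (x : state) : state :=
  phiB (h / 2) (phiA h (phiB (h / 2) x)).

Definition norm1 (x : state) : R := Rabs (fst x) + Rabs (snd x).

Definition stable (psi : state -> state) : Prop :=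
  exists K : R, forall (n : nat) (x : state),
    norm1 (Nat.iter n psi x) <= K * norm1 x.

From Stdlib Require Import Reals Lra Psatz.
From Coquelicot Require Import Coquelicot.
Open Scope R_scope.

(* Both flows are linear.  B is the shear (q, p) |-> (q, p - k t q) with
   k = (1 - c^2) w^2 + 1, and A is, by uniqueness through its conserved energy,
   a rotation of angle c t in the w-weighted phase plane (a drift when c = 0).
   Hence psi_h is a linear map of determinant 1 with trace
   2 cos (c h) - k h sin (c h) / (c w^2)  (resp. 2 - k h^2 / w^2), and the
   step-size condition says exactly that this trace lies in (-2, 2).  Such a map
   preserves a positive definite quadratic form, which bounds all its powers. *)

Lemma derivable_pt_lim_zero_const (f : R -> R) :
  (forall t, derivable_pt_lim f t 0) -> forall t, f t = f 0.
Proof.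
  intros df t.
  set (pr := fun t => exist (fun l => derivable_pt_abs f t l) 0 (df t)).
  apply (null_derivative_1 f pr); reflexivity.
Qed.

Lemma flowB_explicit (w c : R) (phi : R -> state -> state) :
  is_flow (field_B w c) phi ->
  forall t q p, phi t (q, p) = (q, p - ((1 - c ^ 2) * w ^ 2 + 1) * q * t).
Proof.
  intros hflow t q p; set (k := (1 - c ^ 2) * w ^ 2 + 1).
  destruct (hflow (q, p)) as [init dphi].
  assert (q_const : forall s, fst (phi s (q, p)) = q).
  { intros s; rewrite (derivable_pt_lim_zero_const (fun s => fst (phi s (q, p)))), init.
    - reflexivity.
    - intros t0; apply (dphi t0). }
  assert (p_affine : forall s, snd (phi s (q, p)) + k * q * s = p).
  { intros s.
    rewrite (derivable_pt_lim_zero_const (fun s => snd (phi s (q, p)) + k * q * s)), init.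
    { simpl; ring. }
    intros t0; destruct (dphi t0) as [_ dp]; cbn in dp; rewrite q_const in dp.
    apply is_derive_Reals in dp; apply is_derive_Reals.
    replace 0 with (- k * q + k * q) by ring.
    apply (is_derive_plus _ _ _ _ _ dp); auto_derive; [exact I | ring]. }
  rewrite (surjective_pairing (phi t (q, p))), q_const; f_equal.
  specialize (p_affine t); fold k; lra.
Qed.

Lemma oscillator_zero_solution (a b : R) (u v : R -> R) :
  0 < a -> 0 <= b ->
  (forall t, derivable_pt_lim u t (a * v t)) ->
  (forall t, derivable_pt_lim v t (- b * u t)) ->
  u 0 = 0 -> v 0 = 0 -> forall t, u t = 0 /\ v t = 0.
Proof.
  intros apos bnn du dv u0 v0.
  assert (energy_zero : forall t, b * u t ^ 2 + a * v t ^ 2 = 0).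
  { intros t; rewrite (derivable_pt_lim_zero_const (fun s => b * u s ^ 2 + a * v s ^ 2)), u0, v0.
    { ring. }
    intros t0; apply is_derive_Reals.
    pose proof (proj2 (is_derive_Reals _ _ _) (du t0)) as du'.
    pose proof (proj2 (is_derive_Reals _ _ _) (dv t0)) as dv'.
    replace 0 with (b * (INR 2 * (a * v t0) * u t0 ^ 1) + a * (INR 2 * (- b * u t0) * v t0 ^ 1))
      by (simpl; ring).
    apply (is_derive_plus (fun s => b * u s ^ 2) (fun s => a * v s ^ 2));
      apply is_derive_scal, is_derive_pow; assumption. }
  assert (v_zero : forall t, v t = 0).
  { intros t; specialize (energy_zero t).
    assert (0 <= b * u t ^ 2) by (apply Rmult_le_pos; [lra | apply pow2_ge_0]).
    assert (0 <= a * v t ^ 2) by (apply Rmult_le_pos; [lra | apply pow2_ge_0]).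
    assert (v t ^ 2 = 0) by (apply (Rmult_eq_reg_l a); lra).
    nra. }
  intros t; split; [| apply v_zero].
  rewrite (derivable_pt_lim_zero_const u); [exact u0 |].
  intros t0; rewrite <- (Rmult_0_r a), <- (v_zero t0); apply du.
Qed.

Lemma flowA_unique (w c : R) (phi : R -> state -> state) (Q P : R -> R) :
  0 < w -> is_flow (field_A w c) phi ->
  (forall t, derivable_pt_lim Q t (/ w ^ 2 * P t)) ->
  (forall t, derivable_pt_lim P t (- (c ^ 2 * w ^ 2) * Q t)) ->
  forall t, phi t (Q 0, P 0) = (Q t, P t).
Proof.
  intros wpos hflow dQ dP t.
  destruct (hflow (Q 0, P 0)) as [init dphi].
  set (u := fun s => fst (phi s (Q 0, P 0)) - Q s).
  set (v := fun s => snd (phi s (Q 0, P 0)) - P s).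
  assert (du : forall s, derivable_pt_lim u s (/ w ^ 2 * v s)).
  { intros s; destruct (dphi s) as [dq _].
    replace (/ w ^ 2 * v s) with (/ w ^ 2 * snd (phi s (Q 0, P 0)) - / w ^ 2 * P s)
      by (unfold v; ring).
    exact (derivable_pt_lim_minus _ _ _ _ _ dq (dQ s)). }
  assert (dv : forall s, derivable_pt_lim v s (- (c ^ 2 * w ^ 2) * u s)).
  { intros s; destruct (dphi s) as [_ dp].
    replace (- (c ^ 2 * w ^ 2) * u s)
      with (- (c ^ 2 * w ^ 2) * fst (phi s (Q 0, P 0)) - - (c ^ 2 * w ^ 2) * Q s)
      by (unfold u; ring).
    exact (derivable_pt_lim_minus _ _ _ _ _ dp (dP s)). }
  destruct (oscillator_zero_solution (/ w ^ 2) (c ^ 2 * w ^ 2) u v) with t as [ut vt];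
    try assumption.
  - apply Rinv_0_lt_compat; nra.
  - nra.
  - unfold u; rewrite init; simpl; ring.
  - unfold v; rewrite init; simpl; ring.
  - unfold u, v in ut, vt; rewrite (surjective_pairing (phi t _)); f_equal; lra.
Qed.

Definition linmap (a b c d : R) (x : state) : state :=
  (a * fst x + b * snd x, c * fst x + d * snd x).

Lemma flowA_rotation (w c : R) (phi : R -> state -> state) :
  0 < w -> 0 < c -> is_flow (field_A w c) phi ->
  forall t x, phi t x =
    linmap (cos (c * t)) (sin (c * t) / (c * w ^ 2)) (- (c * w ^ 2) * sin (c * t)) (cos (c * t)) x.
Proof.
  intros wpos cpos hflow t [q p]; unfold linmap; cbn [fst snd].
  set (Q := fun s => cos (c * s) * q + sin (c * s) / (c * w ^ 2) * p).
  set (P := fun s => - (c * w ^ 2) * sin (c * s) * q + cos (c * s) * p).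
  assert (init : (Q 0, P 0) = (q, p)).
  { unfold Q, P; rewrite Rmult_0_r, cos_0, sin_0; f_equal; field; nra. }
  rewrite <- init, (flowA_unique w c phi Q P wpos hflow); [reflexivity | |];
    intros s; apply is_derive_Reals; unfold Q, P; auto_derive; try split; field; nra.
Qed.

Lemma flowA_drift (w : R) (phi : R -> state -> state) :
  0 < w -> is_flow (field_A w 0) phi ->
  forall t x, phi t x = linmap 1 (t / w ^ 2) 0 1 x.
Proof.
  intros wpos hflow t [q p]; unfold linmap; cbn [fst snd].
  set (Q := fun s => q + s / w ^ 2 * p).
  set (P := fun _ : R => p).
  assert (init : (Q 0, P 0) = (q, p)) by (unfold Q, P; f_equal; field; nra).
  rewrite <- init, (flowA_unique w 0 phi Q P wpos hflow); [unfold Q, P; f_equal; ring | |];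
    intros s; apply is_derive_Reals; unfold Q, P; auto_derive; try split; field; nra.
Qed.

Lemma norm1_sqr_bounds (x : state) :
  fst x ^ 2 + snd x ^ 2 <= norm1 x ^ 2 <= 2 * (fst x ^ 2 + snd x ^ 2).
Proof.
  destruct x as [q p]; unfold norm1; simpl.
  assert (Rabs q * Rabs q = q * q) by (rewrite <- Rabs_mult; apply Rabs_pos_eq; nra).
  assert (Rabs p * Rabs p = p * p) by (rewrite <- Rabs_mult; apply Rabs_pos_eq; nra).
  pose proof (Rabs_pos q); pose proof (Rabs_pos p); pose proof (pow2_ge_0 (Rabs q - Rabs p)).
  split; nra.
Qed.

Lemma stable_of_invariant_form (psi : state -> state) (F : state -> R) (m M : R) :
  0 < m ->
  (forall x, F (psi x) = F x) ->
  (forall x, m * (fst x ^ 2 + snd x ^ 2) <= F x <= M * (fst x ^ 2 + snd x ^ 2)) ->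
  stable psi.
Proof.
  intros mpos Finv Fbounds.
  assert (Fiter : forall n x, F (Nat.iter n psi x) = F x).
  { induction n as [|n IH]; intros x; simpl; [reflexivity | now rewrite Finv]. }
  assert (Mpos : 0 <= M) by (destruct (Fbounds (1, 0)); simpl in *; nra).
  exists (sqrt (2 * M / m)); intros n x.
  set (y := Nat.iter n psi x).
  assert (sqr_bound : norm1 y ^ 2 <= 2 * M / m * norm1 x ^ 2).
  { destruct (norm1_sqr_bounds x), (norm1_sqr_bounds y), (Fbounds x), (Fbounds y).
    pose proof (Fiter n x) as Fy; fold y in Fy.
    apply Rmult_le_reg_l with m; [exact mpos |].
    replace (m * (2 * M / m * norm1 x ^ 2)) with (2 * M * norm1 x ^ 2) by (field; lra).
    nra. }
  assert (norm1_nonneg : forall z, 0 <= norm1 z)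
    by (intros z; unfold norm1; pose proof (Rabs_pos (fst z)); pose proof (Rabs_pos (snd z)); lra).
  rewrite <- (sqrt_pow2 (norm1 y)), <- (sqrt_pow2 (norm1 x)), <- sqrt_mult_alt by
    (apply norm1_nonneg || (apply Rdiv_le_0_compat; lra)).
  now apply sqrt_le_1_alt.
Qed.

Lemma positive_definite_form_bounds (al be ga : R) :
  0 < ga -> be ^ 2 < 4 * al * ga ->
  exists m M, 0 < m /\ forall q p,
    m * (q ^ 2 + p ^ 2) <= al * q ^ 2 + be * q * p + ga * p ^ 2 <= M * (q ^ 2 + p ^ 2).
Proof.
  intros gapos disc.
  assert (alpos : 0 < al) by (pose proof (pow2_ge_0 be); nra).
  exists ((4 * al * ga - be ^ 2) / (4 * (al + ga))), (al + Rabs be + ga); split.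
  { apply Rdiv_lt_0_compat; lra. }
  intros q p; split.
  - apply Rmult_le_reg_l with (4 * (al + ga)); [lra |].
    replace (4 * (al + ga) * ((4 * al * ga - be ^ 2) / (4 * (al + ga)) * (q ^ 2 + p ^ 2)))
      with ((4 * al * ga - be ^ 2) * (q ^ 2 + p ^ 2)) by (field; lra).
    assert (4 * (al + ga) * (al * q ^ 2 + be * q * p + ga * p ^ 2)
            - (4 * al * ga - be ^ 2) * (q ^ 2 + p ^ 2)
            = (2 * al * q + be * p) ^ 2 + (2 * ga * p + be * q) ^ 2) by ring.
    pose proof (pow2_ge_0 (2 * al * q + be * p)); pose proof (pow2_ge_0 (2 * ga * p + be * q)).
    lra.
  - assert (be * q * p <= Rabs be * (q ^ 2 + p ^ 2)).
    { pose proof (pow2_ge_0 (q - p)); pose proof (pow2_ge_0 (q + p)).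
      destruct (Rcase_abs be); [rewrite Rabs_left | rewrite Rabs_right]; nra. }
    pose proof (pow2_ge_0 q); pose proof (pow2_ge_0 p); nra.
Qed.

Lemma det1_trace_lt2_stable (a b c d : R) :
  a * d - b * c = 1 -> -2 < a + d < 2 -> stable (linmap a b c d).
Proof.
  intros det trace.
  assert (bnz : b <> 0) by (intros ->; pose proof (pow2_ge_0 (a - d)); nra).
  pose proof (pow2_gt_0 b bnz) as b2pos.
  destruct (positive_definite_form_bounds (- b * c) (- b * (d - a)) (b ^ 2))
    as [m [M [mpos bounds]]]; [exact b2pos | |].
  { assert (4 * (- b * c) * b ^ 2 - (- b * (d - a)) ^ 2 - b ^ 2 * (4 - (a + d) ^ 2)
            = 4 * b ^ 2 * (a * d - b * c - 1)) by ring.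
    assert (0 < b ^ 2 * (4 - (a + d) ^ 2)) by (apply Rmult_lt_0_compat; nra).
    nra. }
  apply (stable_of_invariant_form _
    (fun x => - b * c * fst x ^ 2 + - b * (d - a) * fst x * snd x + b ^ 2 * snd x ^ 2) m M mpos).
  - intros [q p]; unfold linmap; simpl.
    transitivity ((a * d - b * c) * (- b * c * q ^ 2 + - b * (d - a) * q * p + b ^ 2 * p ^ 2));
      [ring | rewrite det; ring].
  - intros x; apply bounds.
Qed.

Lemma stable_ext (psi phi : state -> state) :
  (forall x, psi x = phi x) -> stable phi -> stable psi.
Proof.
  intros E [K HK]; exists K; intros n x.
  replace (Nat.iter n psi x) with (Nat.iter n phi x); [apply HK |].
  induction n as [|n IH]; simpl; [reflexivity | now rewrite IH, E].
Qed.

Lemma strang_shear_stable (phiA phiB : R -> state -> state) (h k a b c d : R) :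
  (forall x, phiA h x = linmap a b c d x) ->
  (forall t q p, phiB t (q, p) = (q, p - k * q * t)) ->
  a * d - b * c = 1 -> -2 < a + d - b * k * h < 2 ->
  stable (strang phiA phiB h).
Proof.
  intros HA HB det trace.
  apply stable_ext with
    (linmap (a - b * k * (h / 2)) b (c - d * k * (h / 2) - k * (h / 2) * (a - b * k * (h / 2)))
            (d - k * (h / 2) * b)).
  { intros [q p]; unfold strang; rewrite HB, HA; unfold linmap; simpl; rewrite HB; f_equal; ring. }
  apply det1_trace_lt2_stable; [rewrite <- det; ring | split; lra].
Qed.

Lemma cos_sub_mul_sin_bound (th be : R) :
  0 < th -> 0 < be -> th + atan be < PI / 2 ->
  -1 < cos (2 * th) - be * sin (2 * th) < 1.
Proof.
  intros thpos bepos small.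
  set (ph := atan be).
  assert (phpos : 0 < ph) by (unfold ph; rewrite <- atan_0; now apply atan_increasing).
  pose proof (atan_bound be) as phbound; fold ph in phbound.
  pose proof PI_RGT_0; fold ph in small.
  assert (sin th > 0) by (apply sin_gt_0; lra).
  assert (cos th > 0) by (apply cos_gt_0; lra).
  assert (cos ph > 0) by (apply cos_gt_0; lra).
  assert (cos (th + ph) > 0) by (apply cos_gt_0; lra).
  assert (tan_ph : sin ph = be * cos ph)
    by (pose proof (tan_atan be) as E; fold ph in E; unfold tan in E; rewrite <- E; field; lra).
  (* cos (th + ph) = cos ph * (cos th - be * sin th) *)
  assert (cos th - be * sin th > 0).
  { rewrite cos_plus, tan_ph in *.
    apply Rmult_lt_reg_r with (cos ph); [lra |]; nra. }
  rewrite cos_2a_sin, sin_2a.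
  pose proof (sin2_cos2 th); unfold Rsqr in *.
  split; nra.
Qed.

Lemma step_size_sqr_bound (w h : R) :
  0 < w -> 0 < h -> h < 2 * w / sqrt (1 + w ^ 2) -> h ^ 2 * (1 + w ^ 2) < 4 * w ^ 2.
Proof.
  intros wpos hpos hsmall.
  pose proof (pow2_ge_0 w).
  pose proof (sqrt_sqrt (1 + w ^ 2)) as rr.
  set (r := sqrt (1 + w ^ 2)) in *.
  assert (rpos : 0 < r) by (apply sqrt_lt_R0; lra).
  assert (h * r < 2 * w).
  { apply Rmult_lt_reg_r with (/ r); [now apply Rinv_0_lt_compat |].
    replace (h * r * / r) with h by (field; lra).
    exact hsmall. }
  assert (0 < (2 * w - h * r) * (2 * w + h * r)) by (apply Rmult_lt_0_compat; nra).
  rewrite <- rr by lra; nra.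
Qed.

Theorem proposition9p2 (w c h : R) (phiA phiB : R -> state -> state)
  (hw : 0 < w) (hc : 0 <= c <= 1) (hh : 0 < h)
  (hA : is_flow (field_A w c) phiA) (hB : is_flow (field_B w c) phiB)
  (hcond : (0 < c /\
            c * h + 2 * atan (h * (1 + (1 - c ^ 2) * w ^ 2) / (2 * c * w ^ 2)) < PI)
           \/ (c = 0 /\ h < 2 * w / sqrt (1 + w ^ 2))) :
  stable (strang phiA phiB h).
Proof.
  pose proof (flowB_explicit w c phiB hB) as HB.
  assert (w2pos : 0 < w ^ 2) by nra.
  destruct hcond as [[cpos hsmall] | [c0 hsmall]].
  - apply (strang_shear_stable phiA phiB h _ _ _ _ _ (flowA_rotation w c phiA hw cpos hA h) HB).
    { pose proof (sin2_cos2 (c * h)) as pyth; unfold Rsqr in pyth.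
      rewrite <- pyth; field; nra. }
    set (be := h * (1 + (1 - c ^ 2) * w ^ 2) / (2 * c * w ^ 2)) in hsmall.
    assert (0 <= (1 - c ^ 2) * w ^ 2) by (apply Rmult_le_pos; nra).
    assert (bepos : 0 < be) by (unfold be; apply Rdiv_lt_0_compat; nra).
    destruct (cos_sub_mul_sin_bound (c * h / 2) be) as [lo hi]; [nra | exact bepos | lra |].
    replace (2 * (c * h / 2)) with (c * h) in lo, hi by field.
    assert (cos (c * h) + cos (c * h)
              - sin (c * h) / (c * w ^ 2) * ((1 - c ^ 2) * w ^ 2 + 1) * h
            = 2 * (cos (c * h) - be * sin (c * h))) by (unfold be; field; nra).
    lra.
  - subst c.
    apply (strang_shear_stable phiA phiB h _ _ _ _ _ (flowA_drift w phiA hw hA h) HB); [ring |].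
    pose proof (step_size_sqr_bound w h hw hh hsmall).
    assert (h / w ^ 2 * ((1 - 0 ^ 2) * w ^ 2 + 1) * h * w ^ 2 = h ^ 2 * (1 + w ^ 2))
      by (field; lra).
    split; nra.
Qed.
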